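(* Let $S$ be a set and let $P$ be a specific set of $S$-probabilities all of whose elements are varying. Then: (i) $P$ is complemented, i.e. $p\wedge p'=0$ for every $p\in P$, and hence $P$ (with the pointwise order and $p\mapsto p'=1-p$) is an orthoposet; (ii) if $p,q\in P$ and $p\perp q$, then $p\wedge q=0$; (iii) $P$ is a generalized field of events (GFE).
   Context: An $S$-probability is a function $p\colon S\to[0,1]$. A set $P$ of $S$-probabilities is partially ordered by the pointwise order of functions; $0$ and $1$ denote the constant functions, $p':=1-p$, and $p+q$ denotes the pointwise sum. For $p,q\in P$ (with $0\in P$) one writes $p\wedge q=0$ (''$p$ and $q$ are disjoint'') if the only $x\in P$ with $x\le p$ and $x\le q$ is $x=0$. One writes $p\perp q$ (''orthogonal'') if $p\le q'=1-q$. A set $P$ of $S$-probabilities is specific if (1) $0,1\in P$; (2) $p\in P$ implies $1-p\in P$; (3) if $p,q\in P$ and $p\wedge q=0$ then $p+q\in P$. An $S$-probability $p$ is varying if either $p\in\{0,1\}$, or $p$ is neither $\le 1/2$ everywhere nor $\ge 1/2$ everywhere (i.e. if $p\le 1/2$ or $p\ge1/2$ pointwise, then $p=0$ or $p=1$). An orthoposet is a bounded poset with an antitone involution $'$ which is a complementation ($p\wedge p'=0$ and $p\vee p'=1$). A generalized field of events (GFE) is a set $P$ of $S$-probabilities satisfying (1), (2) and (4): if $p,q\in P$ and $p\perp q$ then $p+q\in P$. *)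

From Stdlib Require Import Reals.
Open Scope R_scope.

Definition Sprob {S : Type} (p : S -> R) : Prop := forall s, 0 <= p s <= 1.

Definition cst0 {S : Type} : S -> R := fun _ => 0.
Definition cst1 {S : Type} : S -> R := fun _ => 1.
Definition compl {S : Type} (p : S -> R) : S -> R := fun s => 1 - p s.
Definition fsum {S : Type} (p q : S -> R) : S -> R := fun s => p s + q s.
Definition fle {S : Type} (p q : S -> R) : Prop := forall s, p s <= q s.

(* p /\ q = 0 in P : the only x in P below p and q is 0 *)
Definition disj {S : Type} (P : (S -> R) -> Prop) (p q : S -> R) : Prop :=
  forall x, P x -> fle x p -> fle x q -> x = cst0.

Definition orth {S : Type} (p q : S -> R) : Prop := fle p (compl q).

Definition specific {S : Type} (P : (S -> R) -> Prop) : Prop :=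
  (forall p, P p -> Sprob p) /\
  P cst0 /\ P cst1 /\
  (forall p, P p -> P (compl p)) /\
  (forall p q, P p -> P q -> disj P p q -> P (fsum p q)).

Definition varying {S : Type} (p : S -> R) : Prop :=
  ((forall s, p s <= 1/2) \/ (forall s, p s >= 1/2)) -> p = cst0 \/ p = cst1.

(* P, with the pointwise order, bounds 0,1 and p' = 1-p, is an orthoposet:
   bounded poset, ' is an antitone involution on P, and a complementation
   (p /\ p' = 0 and p \/ p' = 1, meet/join taken in P). *)
Definition orthoposet {S : Type} (P : (S -> R) -> Prop) : Prop :=
  (forall p, P p -> fle p p) /\
  (forall p q, P p -> P q -> fle p q -> fle q p -> p = q) /\
  (forall p q r, P p -> P q -> P r -> fle p q -> fle q r -> fle p r) /\
  P cst0 /\ P cst1 /\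
  (forall p, P p -> fle cst0 p /\ fle p cst1) /\
  (forall p, P p -> P (compl p)) /\
  (forall p q, P p -> P q -> fle p q -> fle (compl q) (compl p)) /\
  (forall p, P p -> compl (compl p) = p) /\
  (forall p, P p -> disj P p (compl p)) /\
  (forall p, P p -> forall x, P x -> fle p x -> fle (compl p) x -> x = cst1).

Definition GFE {S : Type} (P : (S -> R) -> Prop) : Prop :=
  (forall p, P p -> Sprob p) /\
  P cst0 /\ P cst1 /\
  (forall p, P p -> P (compl p)) /\
  (forall p q, P p -> P q -> orth p q -> P (fsum p q)).

(* A common lower bound x of p and 1 - p satisfies x <= 1/2 everywhere, so a
   varying x must be 0 or 1, and 1 is ruled out since p and 1 - p cannot both
   be 1.  Hence p /\ p' = 0.  Orthogonality p <= q' then places every common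
   lower bound of p and q below q and q', giving (ii); and (ii) turns the
   disjoint-sum axiom of a specific set into the orthogonal-sum axiom of a GFE. *)

From Stdlib Require Import Reals Lra FunctionalExtensionality.
Open Scope R_scope.

Section FunctionOrder.

Variable S : Type.
Implicit Types p q r x : S -> R.

Lemma fle_refl p : fle p p.
Proof. intro s; lra. Qed.

Lemma fle_trans p q r : fle p q -> fle q r -> fle p r.
Proof. intros Hpq Hqr s; specialize (Hpq s); specialize (Hqr s); lra. Qed.

Lemma fle_antisym p q : fle p q -> fle q p -> p = q.
Proof.
  intros Hpq Hqp; apply functional_extensionality; intro s.
  specialize (Hpq s); specialize (Hqp s); lra.
Qed.

Lemma compl_involutive p : compl (compl p) = p.
Proof. apply functional_extensionality; intro s; unfold compl; lra. Qed.

Lemma fle_compl p q : fle p q -> fle (compl q) (compl p).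
Proof. intros Hpq s; specialize (Hpq s); unfold compl; lra. Qed.

Lemma compl_eq_cst0 x : compl x = cst0 -> x = cst1.
Proof.
  intro Hx; apply functional_extensionality; intro s.
  pose proof (equal_f Hx s) as Hs; unfold compl, cst0, cst1 in *; lra.
Qed.

Lemma fle_compl_half x p : fle x p -> fle x (compl p) -> forall s, x s <= 1/2.
Proof. intros Hp Hc s; specialize (Hp s); specialize (Hc s); unfold compl in Hc; lra. Qed.

End FunctionOrder.

Section Disjointness.

Variables (S : Type) (P : (S -> R) -> Prop).
Implicit Types p q x : S -> R.

Lemma disj_sym p q : disj P p q -> disj P q p.
Proof. intros Hpq x Hx Hxq Hxp; exact (Hpq x Hx Hxp Hxq). Qed.

Lemma disj_fle_l p p' q : fle p p' -> disj P p' q -> disj P p q.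
Proof. intros Hpp' Hp'q x Hx Hxp; exact (Hp'q x Hx (fle_trans _ _ _ _ Hxp Hpp')). Qed.

Lemma disj_compl_varying :
  (forall x, P x -> varying x) -> forall p, disj P p (compl p).
Proof.
  intros Hvar p x Hx Hxp Hxc.
  destruct (Hvar x Hx) as [Hx0 | Hx1].
  - left; exact (fle_compl_half _ _ _ Hxp Hxc).
  - exact Hx0.
  - apply functional_extensionality; intro s.
    specialize (Hxp s); specialize (Hxc s).
    rewrite Hx1 in Hxp, Hxc; unfold cst1, compl in *; lra.
Qed.

Lemma disj_orth :
  (forall q, P q -> disj P q (compl q)) ->
  forall p q, P q -> orth p q -> disj P p q.
Proof.
  intros Hcompl p q Hq Hpq.
  exact (disj_fle_l _ _ _ Hpq (disj_sym _ _ (Hcompl q Hq))).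
Qed.

Lemma orthoposet_specific :
  specific P -> (forall p, P p -> disj P p (compl p)) -> orthoposet P.
Proof.
  intros (Hprob & H0 & H1 & Hc & _) Hcompl.
  repeat split; auto.
  - intros p _; apply fle_refl.
  - intros p q _ _; apply fle_antisym.
  - intros p q r _ _ _; apply fle_trans.
  - intros s; now apply Hprob.
  - intros s; now apply Hprob.
  - intros p q _ _; apply fle_compl.
  - intros p _; apply compl_involutive.
  - intros p Hp x Hx Hpx Hcx.
    apply compl_eq_cst0, (Hcompl p Hp _ (Hc x Hx)).
    + rewrite <- (compl_involutive _ p); now apply fle_compl.
    + now apply fle_compl.
Qed.

Lemma GFE_specific :
  specific P -> (forall p q, P p -> P q -> orth p q -> disj P p q) -> GFE P.
Proof.
  intros (Hprob & H0 & H1 & Hc & Hsum) Horth.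
  split; [exact Hprob | split; [exact H0 | split; [exact H1 | split; [exact Hc |]]]].
  intros p q Hp Hq Hpq; exact (Hsum p q Hp Hq (Horth p q Hp Hq Hpq)).
Qed.

End Disjointness.

Theorem proposition2p2 (S : Type) (P : (S -> R) -> Prop) :
  specific P ->
  (forall p, P p -> varying p) ->
  ((forall p, P p -> disj P p (compl p)) /\ orthoposet P) /\
  (forall p q, P p -> P q -> orth p q -> disj P p q) /\
  GFE P.
Proof.
  intros Hspec Hvar.
  assert (Hcompl : forall p, P p -> disj P p (compl p))
    by (intros p _; exact (disj_compl_varying S P Hvar p)).
  assert (Horth : forall p q, P p -> P q -> orth p q -> disj P p q)
    by (intros p q _; exact (disj_orth S P Hcompl p q)).
  split; [split | split].
  - exact Hcompl.
  - exact (orthoposet_specific S P Hspec Hcompl).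
  - exact Horth.
  - exact (GFE_specific S P Hspec Horth).
Qed.
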